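(* Let $s\in\mathbb{C}$ with $\Re(s)>1$. Let $0<q<1$ and, for each integer $r\ge1$, let $\alpha_r(s,q)\in\mathbb{C}$ be given. Suppose that there exist a bounded function $\chi:\mathbb{N}\to\mathbb{C}$ and constants $C>0$ and $\sigma>\Re(s)$ such that for all $q\in(0,1)$ and all integers $r\ge1$: (i) $\displaystyle \lim_{q\to1^-}\alpha_r(s,q)=\frac{\chi(r)}{r^{\,s}}$; (ii) $\displaystyle |\alpha_r(s,q)|\le C\,r^{-\sigma}$. Define, for each integer $n\ge1$, \[ \beta_n(s,q)=\sum_{r=1}^{n}\frac{q^r\,\alpha_r(s,q)}{(q;q)_{n-r}\,(q;q)_{n+r}}, \qquad T_n(s,q):=\frac{\sqrt{n}\,(2n)!\,(1-q)^{2n}\,\beta_n(s,q)}{4^n}. \] Then the iterated limit exists and \[ \lim_{n\to\infty}\lim_{q\to1^-}T_n(s,q)=\frac{L(s,\chi)}{\sqrt{\pi}},\qquad L(s,\chi):=\sum_{r=1}^\infty\frac{\chi(r)}{r^{\,s}}. \]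
   Context: For $0<q<1$ and an integer $m\ge0$, $(q;q)_m=\prod_{j=1}^{m}(1-q^j)$ denotes the $q$-Pochhammer symbol, with $(q;q)_0=1$. The inner limit $q\to1^-$ is taken for fixed $n$, and the outer limit $n\to\infty$ is taken afterwards. *)

From Stdlib Require Export Reals Factorial.
From Coquelicot Require Export Coquelicot.
Open Scope R_scope.

Fixpoint qpoch (q : R) (m : nat) : R :=
  match m with
  | O => 1
  | S k => qpoch q k * (1 - q ^ (S k))
  end.

(* Complex power x^s := exp(s ln x) for a positive real base x. *)
Definition rcpow (x : R) (s : Coquelicot.Complex.C) : Coquelicot.Complex.C :=
  (exp (Re s * ln x) * cos (Im s * ln x), exp (Re s * ln x) * sin (Im s * ln x)).

Definition qbeta (alpha : nat -> R -> Coquelicot.Complex.C) (n : nat) (q : R)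
  : Coquelicot.Complex.C :=
  sum_n_m (fun r => Cmult (RtoC (q ^ r / (qpoch q (n - r) * qpoch q (n + r))))
                          (alpha r q)) 1 n.

Definition Tq (alpha : nat -> R -> Coquelicot.Complex.C) (n : nat) (q : R)
  : Coquelicot.Complex.C :=
  Cmult (RtoC (sqrt (INR n) * INR (Factorial.fact (2 * n)) * (1 - q) ^ (2 * n) / 4 ^ n))
        (qbeta alpha n q).

(* As q -> 1-, (1 - q)^(2n) / ((q;q)_(n-r) (q;q)_(n+r)) -> 1 / ((n-r)! (n+r)!), so the inner
   limit of T_n is the finite sum  sum_(r=1..n) w(n,r) chi(r) / r^s  with
   w(n,r) = sqrt n (2n)! / (4^n (n-r)! (n+r)!).  The weights decrease in r, so
   0 <= w(n,r) <= w(n,0) = sqrt n * C(2n,n) / 4^n <= 1 / sqrt pi, and for fixed r they tend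
   to 1 / sqrt pi by Wallis' formula, obtained from the integrals of sin^k over [0, pi/2].
   Since sum chi(r) / r^s converges absolutely for Re s > 1, Tannery's theorem
   (dominated convergence for series) gives the outer limit L(s, chi) / sqrt pi. *)

From Stdlib Require Import Reals Lra Lia.
From Coquelicot Require Import Coquelicot.
Open Scope R_scope.

(** * Convergence of p-series *)

Lemma Rpower_opp_le_diff (p m : R) : 1 < p -> 1 < m ->
  (p - 1) * Rpower m (- p) <= Rpower (m - 1) (1 - p) - Rpower m (1 - p).
Proof.
  intros Hp Hm. unfold Rpower.
  assert (Hln : ln (m - 1) - ln m <= - / m).
  { rewrite <- ln_div, <- (ln_exp (- / m)) by lra.
    apply ln_le; [apply Rdiv_lt_0_compat; lra|].
    eapply Rle_trans; [|apply exp_ineq1_le]. right. field. lra. }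
  assert (Hexp : 1 + (p - 1) / m <= exp ((1 - p) * (ln (m - 1) - ln m))).
  { eapply Rle_trans; [|apply exp_ineq1_le]. apply Rplus_le_compat_l.
    replace ((p - 1) / m) with ((1 - p) * (- / m)) by (field; lra).
    apply Rmult_le_compat_neg_l; lra. }
  replace ((1 - p) * ln (m - 1)) with ((1 - p) * ln m + (1 - p) * (ln (m - 1) - ln m)) by ring.
  replace (- p * ln m) with ((1 - p) * ln m + - ln m) by ring.
  rewrite !exp_plus, exp_Ropp, exp_ln by lra.
  pose proof (exp_pos ((1 - p) * ln m)).
  replace ((p - 1) * (exp ((1 - p) * ln m) * / m))
    with (exp ((1 - p) * ln m) * ((p - 1) / m)) by (field; lra).
  nra.
Qed.

Lemma ex_series_Rpower_opp (p : R) : 1 < p ->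
  ex_series (fun k => Rpower (INR (S k)) (- p)).
Proof.
  intros Hp.
  set (t := fun k => Rpower (INR (S k)) (- p)).
  assert (Hpartial : forall n, (p - 1) * sum_n t n <= p - Rpower (INR (S n)) (1 - p)).
  { induction n as [|n IHn].
    - rewrite sum_O. unfold t, Rpower. simpl INR.
      rewrite ln_1, !Rmult_0_r, exp_0. lra.
    - rewrite sum_Sn. unfold plus; cbn -[INR Rpower t sum_n].
      assert (Hm : 1 < INR (S n) + 1) by (pose proof (lt_0_INR _ (Nat.lt_0_succ n)); lra).
      pose proof (Rpower_opp_le_diff p _ Hp Hm) as Hstep.
      rewrite Rplus_minus_r in Hstep.
      unfold t at 2. rewrite (S_INR (S n)), Rmult_plus_distr_l. lra. }
  destruct (ex_finite_lim_seq_incr (sum_n t) (p / (p - 1))) as [l Hl].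
  - intros n. rewrite sum_Sn. unfold plus; cbn -[INR Rpower t sum_n].
    assert (0 < t (S n)) by apply exp_pos. lra.
  - intros n. apply Rmult_le_reg_l with (p - 1); [lra|].
    replace ((p - 1) * (p / (p - 1))) with p by (field; lra).
    pose proof (exp_pos ((1 - p) * ln (INR (S n)))). unfold Rpower in Hpartial.
    specialize (Hpartial n). lra.
  - exists l. exact Hl.
Qed.

(** * Tannery's theorem *)

Lemma sum_n_m_le_loc (a b : nat -> R) (n m : nat) :
  (forall k, (n <= k <= m)%nat -> a k <= b k) -> sum_n_m a n m <= sum_n_m b n m.
Proof.
  intros Hab.
  rewrite (sum_n_m_ext_loc a (fun k => Rmin (a k) (b k))).
  - apply sum_n_m_le. intros k. apply Rmin_r.
  - intros k Hk. symmetry. apply Rmin_left, Hab, Hk.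
Qed.

Lemma minus_plus_l {G : AbelianGroup} (a b : G) : minus (plus a b) a = b.
Proof.
  unfold minus. rewrite plus_comm, plus_assoc, plus_opp_l. apply plus_zero_l.
Qed.

Lemma filterlim_sum_n_m {K : AbsRing} {V : NormedModule K} {T : Type}
  (F : (T -> Prop) -> Prop) {FF : Filter F} (f : nat -> T -> V) (g : nat -> V) (m n : nat) :
  (forall k, (m <= k <= n)%nat -> filterlim (f k) F (locally (g k))) ->
  filterlim (fun x => sum_n_m (fun k => f k x) m n) F (locally (sum_n_m g m n)).
Proof.
  intros Hf. destruct (Nat.le_gt_cases m n) as [Hmn|Hnm].
  - induction Hmn as [|n Hmn IHn].
    + rewrite sum_n_n. apply (filterlim_ext (f m)); [intros x; now rewrite sum_n_n|].
      apply Hf. lia.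
    + rewrite sum_n_Sm by lia.
      apply (filterlim_ext (fun x => plus (sum_n_m (fun k => f k x) m n) (f (S n) x))).
      { intros x. now rewrite sum_n_Sm by lia. }
      apply (filterlim_comp_2 (G := locally (sum_n_m g m n)) (H := locally (g (S n))) _ _ plus).
      * apply IHn. intros k Hk. apply Hf. lia.
      * apply Hf. lia.
      * apply filterlim_plus.
  - rewrite sum_n_m_zero by exact Hnm.
    apply (filterlim_ext (fun _ => zero)); [intros x; now rewrite sum_n_m_zero|].
    apply filterlim_const.
Qed.

Lemma filterlim_eventually_succ {T : Type} (u : nat -> T) (F : (T -> Prop) -> Prop) :
  filterlim (fun n => u (S n)) eventually F -> filterlim u eventually F.
Proof.
  intros Hu P HP. destruct (Hu P HP) as [N HN].
  exists (S N). intros [|n] Hn; [lia|]. apply HN. lia.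
Qed.

Lemma norm_sum_n_m_scal_le {V : NormedModule R_AbsRing} (w : nat -> R) (b : nat -> V)
  (B : R) (m n : nat) :
  (forall k, (m <= k <= n)%nat -> Rabs (w k) <= B) ->
  norm (sum_n_m (fun k => scal (w k) (b k)) m n) <= B * sum_n_m (fun k => norm (b k)) m n.
Proof.
  intros Hw.
  eapply Rle_trans; [apply (norm_sum_n_m (K := R_AbsRing) (V := V))|].
  eapply Rle_trans.
  - apply (sum_n_m_le_loc _ (fun k => B * norm (b k))). intros k Hk.
    eapply Rle_trans; [apply (norm_scal (K := R_AbsRing))|].
    apply Rmult_le_compat_r; [apply norm_ge_0 | apply Hw, Hk].
  - right. apply (sum_n_m_mult_l (K := R_Ring)).
Qed.

Lemma filterlim_sum_n_scal_pointwise {V : NormedModule R_AbsRing} (v : nat -> nat -> R)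
  (b : nat -> V) (c : R) (N : nat) :
  (forall k, is_lim_seq (fun n => v n k) c) ->
  filterlim (fun n => sum_n (fun k => scal (v n k) (b k)) N) eventually
    (locally (scal c (sum_n b N))).
Proof.
  intros Hv.
  replace (scal c (sum_n b N)) with (sum_n_m (fun k => scal c (b k)) 0 N)
    by exact (sum_n_m_scal_l c b 0 N).
  apply (filterlim_sum_n_m _ (fun k n => scal (v n k) (b k))). intros k _.
  apply (filterlim_comp _ _ _ (fun n => v n k) (fun x => scal x (b k)) _ (locally c));
    [apply Hv | exact (filterlim_scal_l (V := V) c (b k))].
Qed.

Lemma tannery {V : NormedModule R_AbsRing} (v : nat -> nat -> R) (b : nat -> V) (c B : R) (L : V) :
  ex_series (fun k => norm (b k)) -> is_series b L ->
  (forall k, is_lim_seq (fun n => v n k) c) ->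
  (forall n k, (k <= n)%nat -> Rabs (v n k) <= B) ->
  filterlim (fun n => sum_n (fun k => scal (v n k) (b k)) n) eventually (locally (scal c L)).
Proof.
  intros Habs HL Hv HB.
  apply filterlim_locally_ball_norm. intros eps.
  set (K := 3 + Rabs B + Rabs c).
  assert (HK : 0 < K) by (unfold K; pose proof (Rabs_pos B); pose proof (Rabs_pos c); lra).
  set (d := mkposreal (eps / K) (Rdiv_lt_0_compat _ _ (cond_pos eps) HK)).
  destruct (Cauchy_ex_series _ Habs d) as [N1 Htail].
  destruct (proj1 (filterlim_locally_ball_norm _ _) HL d) as [N2 Hpartial].
  set (N := max N1 N2).
  pose proof (filterlim_sum_n_scal_pointwise v b c N Hv) as Hhead.
  destruct (proj1 (filterlim_locally_ball_norm _ _) Hhead d) as [N3 Hhead_close].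
  exists (max N N3). intros n Hn.
  assert (Hsum_close : ball_norm (scal c L) ((Rabs c + 1) * d) (scal c (sum_n b N))).
  { unfold ball_norm.
    apply Rle_lt_trans with (norm (scal c (minus (sum_n b N) L))).
    { right. f_equal. exact (eq_sym (scal_minus_distr_l c (sum_n b N) L)). }
    eapply Rle_lt_trans; [apply (norm_scal (K := R_AbsRing))|].
    specialize (Hpartial N ltac:(lia)). unfold ball_norm in Hpartial.
    pose proof (Rabs_pos c). pose proof (cond_pos d). change (abs c) with (Rabs c). nra. }
  assert (Htail_small : ball_norm (sum_n (fun k => scal (v n k) (b k)) N) ((Rabs B + 1) * d)
                          (sum_n (fun k => scal (v n k) (b k)) n)).
  { unfold ball_norm, sum_n. rewrite (sum_n_m_Chasles _ 0 N n) by lia.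
    rewrite (minus_plus_l (G := NormedModule.AbelianGroup R_AbsRing V)).
    eapply Rle_lt_trans.
    { apply (norm_sum_n_m_scal_le (fun k => v n k) b (Rabs B)). intros k Hk.
      eapply Rle_trans; [apply HB; lia | apply Rle_abs]. }
    specialize (Htail (S N) n ltac:(lia) ltac:(lia)).
    set (tail := sum_n_m (fun k => norm (b k)) (S N) n) in Htail |- *.
    assert (tail < d) by exact (Rle_lt_trans _ _ _ (Rle_abs tail) Htail).
    change (Rabs B * tail < (Rabs B + 1) * d).
    pose proof (Rabs_pos B). pose proof (cond_pos d). nra. }
  replace (pos eps) with ((Rabs c + 1) * d + d + (Rabs B + 1) * d)
    by (simpl; unfold K; field; apply Rgt_not_eq, HK).
  eapply ball_norm_triangle; [eapply ball_norm_triangle|].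
  - exact Hsum_close.
  - apply (Hhead_close n). lia.
  - exact Htail_small.
Qed.

(** * Wallis' formula *)

Lemma is_lim_seq_INR_ratio (a b : R) : is_lim_seq (fun n => (INR n + a) / (INR n + b)) 1.
Proof.
  assert (Hinf : is_lim_seq (fun n => INR n + b) p_infty).
  { apply (is_lim_seq_plus _ _ p_infty b); [apply is_lim_seq_INR | apply is_lim_seq_const | easy]. }
  apply is_lim_seq_ext_loc with (fun n => 1 + (a - b) * / (INR n + b)).
  - destruct (Hinf (fun x => 0 < x) (ex_intro _ 0 (fun x Hx => Hx))) as [N HN].
    exists N. intros n Hn. specialize (HN n Hn). simpl in HN. field. lra.
  - replace (Finite 1) with (Finite (1 + (a - b) * 0)) by (f_equal; ring).
    apply is_lim_seq_plus'; [apply is_lim_seq_const|].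
    apply is_lim_seq_mult'; [apply is_lim_seq_const|].
    exact (is_lim_seq_inv _ _ Hinf ltac:(easy)).
Qed.

Definition wallis_integral (n : nat) : R := RInt (fun x => sin x ^ n) 0 (PI / 2).

Lemma continuous_sin_pow (n : nat) (x : R) : continuous (fun x => sin x ^ n) x.
Proof. apply (ex_derive_continuous (V := R_NormedModule)). auto_derive. easy. Qed.

Lemma ex_RInt_sin_pow (n : nat) : ex_RInt (fun x => sin x ^ n) 0 (PI / 2).
Proof.
  apply (ex_RInt_continuous (V := R_CompleteNormedModule)). intros x _.
  apply continuous_sin_pow.
Qed.

Lemma wallis_integral_0 : wallis_integral 0 = PI / 2.
Proof.
  unfold wallis_integral. simpl pow. rewrite RInt_const.
  unfold scal; simpl. unfold mult; simpl. ring.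
Qed.

Lemma wallis_integral_1 : wallis_integral 1 = 1.
Proof.
  unfold wallis_integral.
  rewrite (is_RInt_unique _ _ _ (minus (- cos (PI / 2)) (- cos 0))).
  - rewrite cos_PI2, cos_0. unfold minus, plus, opp; simpl. ring.
  - apply (is_RInt_derive (V := R_CompleteNormedModule) (fun x => - cos x)).
    + intros x _. auto_derive; [easy | ring].
    + intros x _. apply continuous_sin_pow.
Qed.

(* [- sin x ^ (n+1) * cos x] vanishes at [0] and [PI/2], and its derivative is
   [(n+2) sin x ^ (n+2) - (n+1) sin x ^ n]. *)
Lemma wallis_integral_SS (n : nat) :
  INR (n + 2) * wallis_integral (n + 2) = INR (n + 1) * wallis_integral n.
Proof.
  set (f := fun x => - (sin x ^ S n * cos x)).
  set (df := fun x => INR (n + 2) * sin x ^ (n + 2) - INR (n + 1) * sin x ^ n).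
  assert (Hdf : is_RInt df 0 (PI / 2) (minus (f (PI / 2)) (f 0))).
  { apply (is_RInt_derive (V := R_CompleteNormedModule)).
    - intros x _. unfold f, df. auto_derive; [easy|].
      pose proof (sin2_cos2 x) as Hpyth. unfold Rsqr in Hpyth.
      rewrite !plus_INR, pow_add. simpl INR.
      replace (match n with 0%nat => 1 | S _ => INR n + 1 end) with (INR n + 1)
        by (destruct n; simpl; ring).
      match goal with |- _ = ?rhs =>
        transitivity (rhs + (INR n + 1) * sin x ^ n * (1 - (sin x * sin x + cos x * cos x))) end.
      + ring.
      + rewrite Hpyth. ring.
    - intros x _. apply (ex_derive_continuous (V := R_NormedModule)).
      unfold df. auto_derive. easy. }
  assert (Hboundary : minus (f (PI / 2)) (f 0) = 0).
  { unfold f. rewrite sin_0, cos_PI2. unfold minus, plus, opp; simpl. ring. }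
  rewrite Hboundary in Hdf.
  assert (Hsplit : is_RInt df 0 (PI / 2)
                     (INR (n + 2) * wallis_integral (n + 2) - INR (n + 1) * wallis_integral n)).
  { apply (is_RInt_minus (V := R_NormedModule)); apply (is_RInt_scal (V := R_NormedModule));
      apply (RInt_correct (V := R_CompleteNormedModule)); apply ex_RInt_sin_pow. }
  pose proof (is_RInt_unique _ _ _ _ Hdf) as E1.
  pose proof (is_RInt_unique _ _ _ _ Hsplit) as E2.
  lra.
Qed.

Lemma wallis_integral_S_le (n : nat) : wallis_integral (S n) <= wallis_integral n.
Proof.
  pose proof PI_RGT_0.
  apply RInt_le; [lra | apply ex_RInt_sin_pow | apply ex_RInt_sin_pow |].
  intros x Hx.
  assert (Hsin : 0 <= sin x) by (apply sin_ge_0; lra).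
  pose proof (proj2 (SIN_bound x)).
  pose proof (pow_le _ n Hsin). simpl. nra.
Qed.

Definition central_ratio (n : nat) : R := INR (fact (2 * n)) / (4 ^ n * INR (fact n) ^ 2).

Lemma central_ratio_pos (n : nat) : 0 < central_ratio n.
Proof.
  pose proof (INR_fact_lt_0 (2 * n)). pose proof (INR_fact_lt_0 n).
  apply Rdiv_lt_0_compat; [easy|].
  apply Rmult_lt_0_compat; apply pow_lt; lra.
Qed.

Lemma central_ratio_S (n : nat) :
  central_ratio (S n) = central_ratio n * (2 * INR n + 1) / (2 * INR n + 2).
Proof.
  unfold central_ratio. replace (2 * S n)%nat with (S (S (2 * n))) by lia.
  rewrite !fact_simpl, !mult_INR, !S_INR, mult_INR.
  pose proof (INR_fact_lt_0 (2 * n)). pose proof (INR_fact_lt_0 n). pose proof (pos_INR n).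
  simpl. field. repeat split; try lra. apply pow_nonzero. lra.
Qed.

Lemma wallis_integral_even_odd (n : nat) :
  wallis_integral (2 * n) = PI / 2 * central_ratio n /\
  wallis_integral (2 * n + 1) = / ((2 * INR n + 1) * central_ratio n).
Proof.
  induction n as [|n [IHeven IHodd]].
  - simpl. rewrite wallis_integral_0, wallis_integral_1. unfold central_ratio. simpl. split; field.
  - pose proof (central_ratio_pos n). pose proof (pos_INR n).
    pose proof (wallis_integral_SS (2 * n)) as Heven.
    pose proof (wallis_integral_SS (2 * n + 1)) as Hodd.
    rewrite IHeven in Heven. rewrite IHodd in Hodd.
    replace (2 * S n)%nat with (2 * n + 2)%nat by lia.
    replace (2 * n + 2 + 1)%nat with (2 * n + 3)%nat by lia.
    replace (2 * n + 1 + 2)%nat with (2 * n + 3)%nat in Hodd by lia.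
    replace (2 * n + 1 + 1)%nat with (2 * n + 2)%nat in Hodd by lia.
    assert (Hnat : forall k, INR (2 * n + k) = 2 * INR n + INR k)
      by (intros k; rewrite plus_INR, mult_INR; reflexivity).
    rewrite !Hnat in Heven, Hodd.
    rewrite central_ratio_S, S_INR.
    split.
    + apply Rmult_eq_reg_l with (2 * INR n + INR 2); [rewrite Heven; simpl; field | simpl]; lra.
    + apply Rmult_eq_reg_l with (2 * INR n + INR 3); [rewrite Hodd; simpl; field | simpl]; lra.
Qed.

(* From [wallis_integral (2n+1) <= wallis_integral (2n) <= wallis_integral (2n-1)]
   and the closed forms. *)
Lemma central_ratio_sqr_bounds (n : nat) :
  INR n / (INR n + / 2) / PI <= INR n * central_ratio n ^ 2 <= / PI.
Proof.
  pose proof PI_RGT_0 as Hpi.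
  destruct n as [|m].
  { simpl INR. replace (0 / (0 + / 2) / PI) with 0 by (field; lra).
    pose proof (Rinv_0_lt_compat _ Hpi). lra. }
  pose proof (central_ratio_pos m). pose proof (central_ratio_pos (S m)) as Hc.
  pose proof (pos_INR m).
  set (c := central_ratio (S m)) in *.
  pose proof (wallis_integral_S_le (2 * S m)) as Hlow.
  pose proof (wallis_integral_S_le (2 * m + 1)) as Hup.
  replace (S (2 * S m)) with (2 * S m + 1)%nat in Hlow by lia.
  replace (S (2 * m + 1)) with (2 * S m)%nat in Hup by lia.
  destruct (wallis_integral_even_odd m) as [_ Hodd_m].
  destruct (wallis_integral_even_odd (S m)) as [Heven_Sm Hodd_Sm].
  rewrite Heven_Sm, Hodd_Sm in Hlow. rewrite Heven_Sm, Hodd_m in Hup.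
  assert (Hcm : (2 * INR m + 1) * central_ratio m = (2 * INR m + 2) * c)
    by (unfold c; rewrite central_ratio_S; field; lra).
  rewrite Hcm in Hup. fold c in Hlow, Hup. rewrite S_INR in *.
  apply Rmult_le_compat_l with (r := (2 * (INR m + 1) + 1) * c) in Hlow; [|nra].
  apply Rmult_le_compat_l with (r := (2 * INR m + 2) * c) in Hup; [|nra].
  rewrite Rinv_r in Hlow, Hup by nra.
  split.
  - apply Rmult_le_reg_r with ((INR m + 1 + / 2) * PI); [nra|].
    replace (_ / _ / PI * _) with (INR m + 1) by (field; lra). nra.
  - apply Rmult_le_reg_r with PI; [lra|]. rewrite Rinv_l by lra. nra.
Qed.

Lemma is_lim_seq_wallis : is_lim_seq (fun n => sqrt (INR n) * central_ratio n) (/ sqrt PI).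
Proof.
  pose proof PI_RGT_0.
  assert (Hsq : is_lim_seq (fun n => INR n * central_ratio n ^ 2) (/ PI)).
  { apply (is_lim_seq_le_le (fun n => INR n / (INR n + / 2) / PI) _ (fun _ => / PI)).
    - apply central_ratio_sqr_bounds.
    - replace (Finite (/ PI)) with (Rbar_mult 1 (/ PI)) by (simpl; f_equal; ring).
      apply is_lim_seq_scal_r.
      apply (is_lim_seq_ext (fun n => (INR n + 0) / (INR n + / 2))).
      + intros n. now rewrite Rplus_0_r.
      + apply is_lim_seq_INR_ratio.
    - apply is_lim_seq_const. }
  rewrite <- sqrt_inv.
  apply (is_lim_seq_ext (fun n => sqrt (INR n * central_ratio n ^ 2))).
  - intros n. rewrite sqrt_mult, sqrt_pow2;
      [easy | apply Rlt_le, central_ratio_pos | apply pos_INR | apply pow2_ge_0].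
  - apply is_lim_seq_continuous; [|exact Hsq].
    apply continuity_pt_sqrt, Rlt_le, Rinv_0_lt_compat. lra.
Qed.

Definition wallis_weight (n r : nat) : R :=
  sqrt (INR n) * INR (fact (2 * n)) / 4 ^ n / (INR (fact (n - r)) * INR (fact (n + r))).

Lemma wallis_weight_0 (n : nat) : wallis_weight n 0 = sqrt (INR n) * central_ratio n.
Proof.
  unfold wallis_weight, central_ratio. rewrite Nat.sub_0_r, Nat.add_0_r.
  pose proof (INR_fact_lt_0 n). field. split; [lra | apply pow_nonzero; lra].
Qed.

Lemma wallis_weight_S (n r : nat) : (r < n)%nat ->
  wallis_weight n (S r) = wallis_weight n r * ((INR n - INR r) / (INR n + (INR r + 1))).
Proof.
  intros Hr. unfold wallis_weight.
  replace (n - r)%nat with (S (n - S r)) by lia.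
  replace (n + S r)%nat with (S (n + r)) by lia.
  rewrite !fact_simpl, !mult_INR.
  replace (INR (S (n - S r))) with (INR n - INR r)
    by (rewrite S_INR, minus_INR, S_INR by lia; ring).
  rewrite S_INR, plus_INR.
  pose proof (INR_fact_lt_0 (n - S r)). pose proof (INR_fact_lt_0 (n + r)).
  pose proof (pos_INR r). pose proof (lt_INR _ _ Hr).
  field. repeat split; try lra. apply pow_nonzero. lra.
Qed.

Lemma wallis_weight_nonneg (n r : nat) : 0 <= wallis_weight n r.
Proof.
  unfold wallis_weight, Rdiv.
  apply Rle_mult_inv_pos; [apply Rle_mult_inv_pos; [apply Rmult_le_pos|]|].
  - apply sqrt_pos.
  - apply pos_INR.
  - apply pow_lt. lra.
  - apply Rmult_lt_0_compat; apply INR_fact_lt_0.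
Qed.

Lemma wallis_weight_le_0 (n r : nat) : (r <= n)%nat -> wallis_weight n r <= wallis_weight n 0.
Proof.
  induction r as [|r IHr]; intros Hr; [lra|].
  rewrite wallis_weight_S by lia.
  pose proof (wallis_weight_nonneg n r). pose proof (pos_INR r). pose proof (lt_INR r n ltac:(lia)).
  assert ((INR n - INR r) / (INR n + (INR r + 1)) <= 1)
    by (rewrite <- Rdiv_le_1 by lra; lra).
  assert (0 <= (INR n - INR r) / (INR n + (INR r + 1)))
    by (apply Rlt_le, Rdiv_lt_0_compat; lra).
  specialize (IHr ltac:(lia)). nra.
Qed.

Lemma wallis_weight_0_le (n : nat) : wallis_weight n 0 <= / sqrt PI.
Proof.
  pose proof PI_RGT_0.
  rewrite wallis_weight_0, <- sqrt_inv.
  rewrite <- (sqrt_pow2 (central_ratio n)) by apply Rlt_le, central_ratio_pos.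
  rewrite <- sqrt_mult by (apply pos_INR || apply pow2_ge_0).
  apply sqrt_le_1_alt, central_ratio_sqr_bounds.
Qed.

Lemma is_lim_seq_wallis_weight (r : nat) : is_lim_seq (fun n => wallis_weight n r) (/ sqrt PI).
Proof.
  induction r as [|r IHr].
  - apply (is_lim_seq_ext (fun n => sqrt (INR n) * central_ratio n)).
    + intros n. symmetry. apply wallis_weight_0.
    + apply is_lim_seq_wallis.
  - apply (is_lim_seq_ext_loc
             (fun n => wallis_weight n r * ((INR n + - INR r) / (INR n + (INR r + 1))))).
    + exists (S r). intros n Hn. symmetry. apply wallis_weight_S. lia.
    + replace (Finite (/ sqrt PI)) with (Finite (/ sqrt PI * 1)) by (f_equal; ring).
      apply is_lim_seq_mult'; [exact IHr | apply is_lim_seq_INR_ratio].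
Qed.

(** * q-factorials *)

Fixpoint qint (k : nat) (q : R) : R :=
  match k with O => 0 | S j => 1 + q * qint j q end.

Fixpoint qfact (m : nat) (q : R) : R :=
  match m with O => 1 | S k => qfact k q * qint (S k) q end.

Lemma qint_mul_1_minus (k : nat) (q : R) : (1 - q) * qint k q = 1 - q ^ k.
Proof.
  induction k as [|k IHk]; simpl; [ring|].
  replace ((1 - q) * (1 + q * qint k q)) with (1 - q + q * ((1 - q) * qint k q)) by ring.
  rewrite IHk. ring.
Qed.

Lemma qpoch_qfact (m : nat) (q : R) : qpoch q m = (1 - q) ^ m * qfact m q.
Proof.
  induction m as [|m IHm]; [simpl; ring|].
  change (qpoch q (S m)) with (qpoch q m * (1 - q ^ S m)).
  rewrite IHm, <- (qint_mul_1_minus (S m) q). simpl. ring.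
Qed.

Lemma qint_1 (k : nat) : qint k 1 = INR k.
Proof. induction k as [|k IHk]; [reflexivity|]. simpl qint. rewrite IHk, S_INR. ring. Qed.

Lemma qfact_1 (m : nat) : qfact m 1 = INR (fact m).
Proof.
  induction m as [|m IHm]; [reflexivity|].
  simpl qfact. rewrite IHm, qint_1, fact_simpl, mult_INR, S_INR. ring.
Qed.

Lemma qint_S_ge_1 (k : nat) (q : R) : 0 <= q -> 1 <= qint (S k) q.
Proof.
  intros Hq.
  assert (Hk : 0 <= qint k q).
  { induction k as [|k IHk]; simpl; [lra|].
    pose proof (Rmult_le_pos _ _ Hq IHk). lra. }
  simpl. pose proof (Rmult_le_pos _ _ Hq Hk). lra.
Qed.

Lemma qfact_pos (m : nat) (q : R) : 0 <= q -> 0 < qfact m q.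
Proof.
  intros Hq. induction m as [|m IHm]; [simpl; lra|].
  change (qfact (S m) q) with (qfact m q * qint (S m) q).
  pose proof (qint_S_ge_1 m q Hq). apply Rmult_lt_0_compat; lra.
Qed.

Lemma ex_derive_qint (k : nat) (q : R) : ex_derive (qint k) q.
Proof.
  induction k as [|k IHk]; simpl; [apply ex_derive_const|].
  apply (ex_derive_plus (fun _ => 1) (fun q => q * qint k q)); [apply ex_derive_const|].
  apply (ex_derive_mult (fun q => q)); [apply ex_derive_id | exact IHk].
Qed.

Lemma ex_derive_qfact (m : nat) (q : R) : ex_derive (qfact m) q.
Proof.
  induction m as [|m IHm]; [apply ex_derive_const|].
  apply (ex_derive_mult (qfact m) (qint (S m))); [exact IHm | apply ex_derive_qint].
Qed.

Definition qweight (n r : nat) (q : R) : R :=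
  sqrt (INR n) * INR (fact (2 * n)) * (1 - q) ^ (2 * n) / 4 ^ n
  * (q ^ r / (qpoch q (n - r) * qpoch q (n + r))).

(* The factor [(1 - q) ^ (2 n)] cancels against the two q-Pochhammer symbols. *)
Lemma is_lim_qweight (n r : nat) : (r <= n)%nat ->
  filterlim (qweight n r) (at_left 1) (locally (wallis_weight n r)).
Proof.
  intros Hr.
  set (K := sqrt (INR n) * INR (fact (2 * n)) / 4 ^ n).
  set (w := fun q => K * (q ^ r / (qfact (n - r) q * qfact (n + r) q))).
  apply (filterlim_ext_loc w).
  - exists (mkposreal 1 Rlt_0_1). intros q Hq Hq1.
    assert (Hq0 : 0 <= q).
    { apply Rabs_def2 in Hq. unfold minus, plus, opp in Hq. simpl in Hq. lra. }
    unfold w, qweight, K. rewrite !qpoch_qfact.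
    replace (2 * n)%nat with ((n - r) + (n + r))%nat by lia. rewrite pow_add.
    pose proof (qfact_pos (n - r) q Hq0). pose proof (qfact_pos (n + r) q Hq0).
    pose proof (pow_lt (1 - q) (n - r) ltac:(lra)). pose proof (pow_lt (1 - q) (n + r) ltac:(lra)).
    field. repeat split; try lra. apply pow_nonzero. lra.
  - replace (wallis_weight n r) with (w 1).
    2:{ unfold w, K, wallis_weight. rewrite !qfact_1, pow1. field.
        pose proof (INR_fact_lt_0 (n - r)). pose proof (INR_fact_lt_0 (n + r)).
        repeat split; try lra. apply pow_nonzero. lra. }
    apply (filterlim_filter_le_1 (F := locally 1)).
    { intros P HP. apply (filter_imp _ _ (fun q Hq _ => Hq)), HP. }
    apply (ex_derive_continuous (V := R_NormedModule)). unfold w.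
    pose proof (INR_fact_lt_0 (n - r)). pose proof (INR_fact_lt_0 (n + r)).
    auto_derive. rewrite !qfact_1. repeat split; try apply ex_derive_qfact. nra.
Qed.

(** * The iterated limit *)

(* Real weights act on [C] through the real normed module [C_R_NormedModule], so that the
   results above over [NormedModule R_AbsRing] apply. *)
Lemma Cmult_RtoC_scal (x : R) (z : C) : Cmult (RtoC x) z = @scal R_Ring C_R_ModuleSpace x z.
Proof.
  destruct z as [a b]. unfold RtoC, Cmult, scal; simpl.
  unfold prod_scal, scal; simpl. unfold mult; simpl. f_equal; ring.
Qed.

Lemma norm_C_R (z : C) : @norm R_AbsRing C_R_NormedModule z = Cmod z.
Proof.
  destruct z as [a b]. unfold norm; simpl. unfold prod_norm, Cmod; simpl.
  unfold norm; simpl. unfold abs; simpl.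
  rewrite !Rmult_1_r, <- !Rabs_mult, !Rabs_pos_eq by nra. reflexivity.
Qed.

Lemma Cmod_rcpow (x : R) (s : C) : Cmod (rcpow x s) = exp (Re s * ln x).
Proof.
  unfold rcpow, Cmod; cbn [fst snd].
  set (t := Im s * ln x).
  replace ((exp (Re s * ln x) * cos t) ^ 2 + (exp (Re s * ln x) * sin t) ^ 2)
    with (exp (Re s * ln x) ^ 2 * (Rsqr (sin t) + Rsqr (cos t))) by (unfold Rsqr; ring).
  rewrite sin2_cos2, Rmult_1_r. apply sqrt_pow2, Rlt_le, exp_pos.
Qed.

Lemma ex_series_Cmod_dirichlet (chi : nat -> C) (M : R) (s : C) :
  1 < Re s -> (forall r, Cmod (chi r) <= M) ->
  ex_series (fun k => Cmod (Cdiv (chi (S k)) (rcpow (INR (S k)) s))).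
Proof.
  intros Hs HM.
  apply (ex_series_le (V := R_CompleteNormedModule) _ (fun k => M * Rpower (INR (S k)) (- Re s))).
  - intros k. change (norm (Cmod ?z)) with (Rabs (Cmod z)).
    rewrite Rabs_pos_eq by apply Cmod_ge_0.
    assert (Hpow : rcpow (INR (S k)) s <> 0)
      by (apply Cmod_gt_0; rewrite Cmod_rcpow; apply exp_pos).
    unfold Cdiv. rewrite Cmod_mult, Cmod_inv, Cmod_rcpow by exact Hpow.
    unfold Rpower. rewrite <- exp_Ropp, Ropp_mult_distr_l.
    apply Rmult_le_compat_r; [apply Rlt_le, exp_pos | apply HM].
  - apply (ex_series_scal_l (V := R_NormedModule)), ex_series_Rpower_opp, Hs.
Qed.

Lemma Tq_sum_qweight (alpha : nat -> R -> C) (n : nat) (q : R) :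
  Tq alpha n q = sum_n_m (fun r => @scal R_Ring C_R_ModuleSpace (qweight n r q) (alpha r q)) 1 n.
Proof.
  unfold Tq, qbeta. rewrite <- (sum_n_m_mult_l (K := C_Ring)).
  (* Sums in [C] and in [C_R_ModuleSpace] are convertible, but not syntactically equal. *)
  match goal with |- ?lhs = _ =>
    change (lhs = @sum_n_m C_AbelianMonoid
                    (fun r => @scal R_Ring C_R_ModuleSpace (qweight n r q) (alpha r q)) 1 n) end.
  apply sum_n_m_ext. intros r. change (@mult C_Ring) with Cmult.
  rewrite Cmult_assoc, <- RtoC_mult. apply Cmult_RtoC_scal.
Qed.

Lemma is_lim_Tq (alpha : nat -> R -> C) (a : nat -> C) (n : nat) :
  (forall r, (1 <= r <= n)%nat -> filterlim (alpha r) (at_left 1) (locally (a r))) ->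
  filterlim (Tq alpha n) (at_left 1)
    (locally (sum_n_m (fun r => @scal R_Ring C_R_ModuleSpace (wallis_weight n r) (a r)) 1 n)).
Proof.
  intros Halpha.
  eapply filterlim_ext; [intros q; symmetry; apply Tq_sum_qweight|].
  apply (filterlim_sum_n_m (V := C_R_NormedModule) (at_left 1)). intros r Hr.
  apply (filterlim_comp_2 (G := locally (wallis_weight n r)) (H := locally (a r)) _ _ scal).
  - apply is_lim_qweight. lia.
  - apply Halpha, Hr.
  - apply (filterlim_scal (V := C_R_NormedModule)).
Qed.

Lemma is_lim_wallis_weighted_sum {V : NormedModule R_AbsRing} (b : nat -> V) (L : V) :
  ex_series (fun k => norm (b (S k))) -> is_series (fun k => b (S k)) L ->
  filterlim (fun n => sum_n_m (fun r => scal (wallis_weight n r) (b r)) 1 n) eventually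
    (locally (scal (/ sqrt PI) L)).
Proof.
  intros Habs HL. apply filterlim_eventually_succ.
  apply (filterlim_ext (fun m => sum_n (fun k => scal (wallis_weight (S m) (S k)) (b (S k))) m)).
  { intros m. exact (sum_n_m_S (fun r => scal (wallis_weight (S m) r) (b r)) 0 m). }
  apply (tannery _ _ _ (/ sqrt PI) _ Habs HL).
  - intros k. apply (is_lim_seq_incr_1 (fun n => wallis_weight n (S k))), is_lim_seq_wallis_weight.
  - intros m k Hk. rewrite Rabs_pos_eq by apply wallis_weight_nonneg.
    eapply Rle_trans; [apply wallis_weight_le_0; lia | apply wallis_weight_0_le].
Qed.

Theorem mainTheorem1 (s : Coquelicot.Complex.C) (hs : 1 < Re s)
  (alpha : nat -> R -> Coquelicot.Complex.C)
  (chi : nat -> Coquelicot.Complex.C) (Cst sigma : R)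
  (hchi : exists M : R, forall r : nat, Cmod (chi r) <= M)
  (hC : 0 < Cst) (hsigma : Re s < sigma)
  (hlim : forall r : nat, (1 <= r)%nat ->
     filterlim (fun q => alpha r q) (at_left 1)
       (locally (Cdiv (chi r) (rcpow (INR r) s))))
  (hbound : forall (q : R) (r : nat), 0 < q < 1 -> (1 <= r)%nat ->
     Cmod (alpha r q) <= Cst * Rpower (INR r) (- sigma)) :
  exists L : Coquelicot.Complex.C,
    is_series (fun k => Cdiv (chi (S k)) (rcpow (INR (S k)) s)) L /\
    exists l : nat -> Coquelicot.Complex.C,
      (forall n : nat, (1 <= n)%nat ->
         filterlim (fun q => Tq alpha n q) (at_left 1) (locally (l n))) /\
      filterlim l eventually (locally (Cdiv L (RtoC (sqrt PI)))).
Proof.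
  destruct hchi as [M HM].
  set (a := fun r => Cdiv (chi r) (rcpow (INR r) s)).
  assert (Habs : ex_series (fun k => @norm _ C_R_NormedModule (a (S k)))).
  { apply (ex_series_ext (fun k => Cmod (a (S k)))); [intros k; symmetry; apply norm_C_R|].
    exact (ex_series_Cmod_dirichlet chi M s hs HM). }
  destruct (ex_series_le (V := C_R_CompleteNormedModule) (fun k => a (S k)) _
              (fun k => Rle_refl _) Habs) as [L HL].
  exists L. split; [exact HL|].
  exists (fun n => sum_n_m (fun r => @scal R_Ring C_R_ModuleSpace (wallis_weight n r) (a r)) 1 n).
  split.
  - intros n _. apply is_lim_Tq. intros r Hr. apply hlim. lia.
  - replace (Cdiv L (RtoC (sqrt PI))) with (@scal R_Ring C_R_ModuleSpace (/ sqrt PI) L).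
    + exact (is_lim_wallis_weighted_sum a L Habs HL).
    + pose proof (sqrt_lt_R0 _ PI_RGT_0).
      unfold Cdiv. rewrite Cmult_comm, <- RtoC_inv by lra. symmetry. apply Cmult_RtoC_scal.
Qed.
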